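(* If $Q$ is a Jordan loop of order $9$, then either $Q$ has exponent $3$ (i.e. $x^3=e$ for all $x\in Q$) or $Q$ is cyclic (i.e. $Q=\langle x\rangle$ for some $x\in Q$).
   Context: A loop is a set $Q$ with a binary operation (juxtaposition) and neutral element $e$ such that for all $a,b$ the equations $ax=b$, $ya=b$ have unique solutions. A Jordan loop is a commutative loop satisfying $x^2(yx)=(x^2y)x$. $x^3$ denotes $x(xx)$. $\langle x\rangle$ denotes the subloop generated by $x$ (the smallest subloop of $Q$ containing $x$). *)

From mathcomp Require Import all_boot.
Set Implicit Arguments. Unset Strict Implicit. Unset Printing Implicit Defensive.

Definition is_loop (T : Type) (mul : T -> T -> T) (e : T) : Prop :=
  (forall x, mul e x = x) /\ (forall x, mul x e = x) /\
  (forall a b, exists! x, mul a x = b) /\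
  (forall a b, exists! y, mul y a = b).

Definition commutative_op (T : Type) (mul : T -> T -> T) : Prop :=
  forall x y, mul x y = mul y x.

Definition is_jordan_loop (T : Type) (mul : T -> T -> T) (e : T) : Prop :=
  is_loop mul e /\ commutative_op mul /\
  forall x y, mul (mul x x) (mul y x) = mul (mul (mul x x) y) x.

Definition cube (T : Type) (mul : T -> T -> T) (x : T) : T := mul x (mul x x).

Definition is_subloop (T : finType) (mul : T -> T -> T) (e : T) (S : {set T}) : Prop :=
  e \in S /\
  (forall a b, a \in S -> b \in S -> mul a b \in S) /\
  (forall a b x, a \in S -> b \in S -> mul a x = b -> x \in S) /\
  (forall a b y, a \in S -> b \in S -> mul y a = b -> y \in S).

Definition in_gen (T : finType) (mul : T -> T -> T) (e : T) (x y : T) : Prop :=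
  forall S : {set T}, is_subloop mul e S -> x \in S -> y \in S.

Definition loop_cyclic (T : finType) (mul : T -> T -> T) (e : T) : Prop :=
  exists x : T, forall y : T, in_gen mul e x y.

(* Squaring is a bijection of a commutative loop of odd order: the map sending
   y to the solution of y z = c is an involution, and an involution of a set
   of odd size has a fixed point y, i.e. y y = c.  By the coset argument a
   proper subloop S satisfies 2|S| <= 9, so |S| <= 4.  If x^3 <> e, then the
   Jordan identity gives x x^3 = x^2 x^2 <> e, so the left powers
   e, x, x^2, x^3, x x^3 are pairwise distinct: <x> has at least five elements
   and is therefore the whole loop. *)
From mathcomp Require Import all_boot zify.
Set Implicit Arguments. Unset Strict Implicit. Unset Printing Implicit Defensive.

Lemma involution_fixpoint_odd (T : finType) (f : T -> T) :
  involutive f -> odd #|T| -> exists y, f y = y.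
Proof.
move=> fK oddT; case: (pickP (fun y => f y == y)) => [y /eqP|fix0]; first by exists y.
have f_neq y : f y != y by rewrite fix0.
pose A := [set y | enum_rank y < enum_rank (f y)].
have CA : ~: A = f @: A.
  apply/setP => y; rewrite !inE; apply/idP/imsetP.
  - rewrite -leqNgt leq_eqVlt => /orP[/eqP eq_rk|lt_rk].
      by move: (f_neq y); rewrite (enum_rank_inj (val_inj eq_rk)) eqxx.
    by exists (f y); rewrite ?inE fK.
  - by case=> z; rewrite inE => lt_rk ->; rewrite fK -leqNgt ltnW.
have := cardsC A; rewrite CA card_imset ?addnn => [cardT|]; last exact: can_inj fK.
by move: oddT; rewrite -cardT odd_double.
Qed.

Section Loop.
Variables (T : finType) (mul : T -> T -> T) (e : T).
Hypothesis loopT : is_loop mul e.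

Lemma mul_e_l x : mul e x = x. Proof. by case: loopT. Qed.

Lemma mul_e_r x : mul x e = x. Proof. by case: loopT => _ []. Qed.

Lemma mul_cancl a x1 x2 : mul a x1 = mul a x2 -> x1 = x2.
Proof.
case: loopT => _ [_ [ldiv _]] eq_ax.
have [z [_ uniq_z]] := ldiv a (mul a x2).
by rewrite -(uniq_z _ eq_ax) (uniq_z _ erefl).
Qed.

(* The left translate a S of a proper subloop S by some a outside S is
   disjoint from S and has the same size. *)
Lemma proper_subloop_card (S : {set T}) :
  is_subloop mul e S -> S != setT -> #|S|.*2 <= #|T|.
Proof.
case=> _ [_ [_ rdivS]]; rewrite -properT => /properP[_ [a _ aS]].
have disj : S :&: [set mul a s | s in S] = set0.
  apply/eqP; apply/set0Pn => -[z /setIP[zS /imsetP[s sS eq_z]]].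
  by move: aS; rewrite (rdivS s z a sS zS (esym eq_z)).
rewrite -addnn -[X in _ + X](card_imset _ (@mul_cancl a)) -cardsUI disj cards0 addn0.
exact: max_card.
Qed.

Definition lpow (x : T) (n : nat) : T := iter n (mul x) e.

Lemma lpow_subloop (S : {set T}) x n :
  is_subloop mul e S -> x \in S -> lpow x n \in S.
Proof. by case=> eS [mulS _] xS; elim: n => //= n IHn; apply: mulS. Qed.

Lemma lpow_inj x n :
  (forall k, 0 < k <= n -> lpow x k != e) ->
  {in [pred k | k <= n] &, injective (lpow x)}.
Proof.
move=> lpow_neq; suff le_inj i j : i <= j <= n -> lpow x i = lpow x j -> i = j.
  move=> i j; rewrite !inE => le_in le_jn eq_ij.
  case: (leqP i j) => [le_ij|/ltnW le_ji].
    by apply: le_inj eq_ij; rewrite le_ij.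
  by apply/esym/(le_inj _ _ _ (esym eq_ij)); rewrite le_ji.
elim: i j => [|i IHi] [|j] //=.
  by move=> le_jn eq_j; have /eqP[] := lpow_neq j.+1 le_jn; rewrite eq_j.
case/andP=> le_ij le_jn eq_ij; congr _.+1.
by apply: IHi (mul_cancl eq_ij); rewrite -ltnS le_ij ltnW.
Qed.

Lemma subloop_card_gt_lpow (S : {set T}) x n :
  is_subloop mul e S -> x \in S ->
  (forall k, 0 < k <= n -> lpow x k != e) -> n < #|S|.
Proof.
move=> subS xS lpow_neq.
have uniq_pows : uniq [seq lpow x k | k <- iota 0 n.+1].
  rewrite map_inj_in_uniq ?iota_uniq // => i j.
  by rewrite !mem_iota !add0n !ltnS; apply: lpow_inj.
rewrite cardE -(size_iota 0 n.+1) -(size_map (lpow x)).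
apply: uniq_leq_size uniq_pows _ => _ /mapP[k _ ->].
by rewrite mem_enum lpow_subloop.
Qed.

End Loop.

Section CommutativeLoop.
Variables (T : finType) (mul : T -> T -> T) (e : T).
Hypotheses (loopT : is_loop mul e) (mulC : commutative_op mul) (oddT : odd #|T|).

Lemma square_surj c : exists y, mul y y = c.
Proof.
have ldiv y : exists z, mul y z = c.
  by case: loopT => _ [_ [ldiv _]]; have [z []] := ldiv y c; exists z.
pose f y := odflt y [pick z | mul y z == c].
have fP y : mul y (f y) = c.
  rewrite /f; case: pickP => [z /eqP //|no_z].
  by have [z eq_z] := ldiv y; move: (no_z z); rewrite eq_z eqxx.
have fK : involutive f.
  by move=> y; apply: (@mul_cancl _ _ _ loopT (f y)); rewrite fP mulC fP.
have [y fy] := involution_fixpoint_odd fK oddT.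
by exists y; rewrite -{2}fy fP.
Qed.

Lemma square_inj : injective (fun y => mul y y).
Proof.
have /image_injP sq_inj : #|[seq mul y y | y in T]| == #|T|.
  rewrite eqn_leq leq_image_card subset_leq_card //; apply/subsetP => c _.
  by have [y <-] := square_surj c; apply: image_f.
by move=> x y; apply: sq_inj.
Qed.

Lemma square_eq_e y : mul y y = e -> y = e.
Proof. by move=> yy; apply: square_inj; rewrite /= yy mul_e_l. Qed.

End CommutativeLoop.

Lemma jordan_square_square (T : Type) (mul : T -> T -> T) (e : T) x :
  is_jordan_loop mul e -> mul (mul x x) (mul x x) = mul x (cube mul x).
Proof. by case=> _ [mulC jordan]; rewrite jordan /cube (mulC _ x) (mulC _ x). Qed.

Lemma jordan9_cube_neq_e_generates (T : finType) (mul : T -> T -> T) (e : T)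
    (S : {set T}) x :
  is_jordan_loop mul e -> #|T| = 9 -> cube mul x != e ->
  is_subloop mul e S -> x \in S -> S = setT.
Proof.
move=> jordanT cardT x3_neq subS xS; have [loopT [mulC _]] := jordanT.
have oddT : odd #|T| by rewrite cardT.
have sq_e := square_eq_e loopT mulC oddT.
have x_neq : x != e by apply: contraNneq x3_neq => ->; rewrite /cube !(mul_e_l loopT).
have x2_neq : mul x x != e by exact: contra_neq (sq_e x) x_neq.
have x4_neq : mul x (cube mul x) != e.
  by rewrite -(jordan_square_square x jordanT); exact: contra_neq (sq_e _) x2_neq.
have lpow_neq k : 0 < k <= 4 -> lpow mul e x k != e.
  by case: k => [|[|[|[|[|k]]]]] //= _; rewrite ?(mul_e_r loopT).
apply/eqP; apply: contraTT (subloop_card_gt_lpow loopT subS xS lpow_neq).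
by move/(proper_subloop_card loopT subS); rewrite cardT -leqNgt; lia.
Qed.

Theorem lemma3p6 (T : finType) (mul : T -> T -> T) (e : T) :
  is_jordan_loop mul e -> #|T| = 9 ->
  (forall x : T, cube mul x = e) \/ loop_cyclic mul e.
Proof.
move=> jordanT cardT.
case: (pickP (fun x => cube mul x != e)) => [x x3_neq|all_cubes]; last first.
  by left=> x; move/negbFE/eqP: (all_cubes x).
right; exists x => y S subS xS.
by rewrite (jordan9_cube_neq_e_generates jordanT cardT x3_neq subS xS) inE.
Qed.
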